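(* Let $(\Omega,\nu)$ be an atomless Borel probability space. Suppose that $(W_n)_{n}$ is a sequence of graphons $W_n:\Omega^2\to[0,1]$ converging to a graphon $W:\Omega^2\to[0,1]$ in the cut-norm, i.e. $\|W_n-W\|_\square\to0$. Let $U:\Omega^2\to[0,1]$ be an arbitrary graphon with $U\le W$ (pointwise). Then there exists a sequence of graphons $(U_n)_n$ with $U_n\le W_n$ for every $n$ such that $\|U_n-U\|_\square\to0$.
   Context: A graphon on $\Omega$ is a symmetric measurable function $\Omega^2\to[0,1]$. For a bounded measurable symmetric $V:\Omega^2\to\mathbb{R}$, the cut-norm is $\|V\|_\square=\sup_{A,B\subset\Omega}\left|\int_{A\times B}V\,\mathrm{d}\nu^2\right|$, the supremum over measurable sets. *)

From HB Require Import structures.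
From mathcomp Require Import all_boot all_order all_algebra.
From mathcomp Require Import all_classical all_reals all_analysis.
Set Implicit Arguments. Unset Strict Implicit. Unset Printing Implicit Defensive.
Import Order.TTheory GRing.Theory Num.Theory.
Local Open Scope classical_set_scope.
Local Open Scope ring_scope.

(* A Borel space (Janson's convention): a measurable space isomorphic to a
   Borel subset of [0,1], i.e. there is an injective measurable map into
   [0,1] whose image is Borel and which maps measurable sets to measurable
   (Borel) sets (so its inverse on the image is measurable). *)
Definition borel_space d (T : measurableType d) (R : realType) : Prop :=
  exists f : T -> R,
    [/\ injective f, measurable_fun setT f,
        range f `<=` `[0%R, 1%R]%classic, measurable (range f)
      & forall A : set T, measurable A -> measurable (f @` A)].

Definition atomless d (T : measurableType d) (R : realType)
    (mu : set T -> \bar R) : Prop :=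
  forall A : set T, measurable A -> (0 < mu A)%E ->
    exists2 B : set T, measurable B /\ B `<=` A & (0 < mu B < mu A)%E.

Definition graphon d (T : measurableType d) (R : realType)
    (W : T * T -> R) : Prop :=
  [/\ measurable_fun setT W,
      forall x y, W (x, y) = W (y, x)
    & forall z, 0 <= W z <= 1].

Definition cutnorm d (T : measurableType d) (R : realType)
    (mu : set T -> \bar R) (V : T * T -> R) : \bar R :=
  ereal_sup [set x | exists A B : set T, [/\ measurable A, measurable B &
     x = `| \int[(mu \x mu)%E]_(z in A `*` B) (V z)%:E |%E]].

(* Put H := U / W (with x / 0 = 0), so that U = H W, and take U_n := H W_n.
   Then U_n <= W_n and U_n - U = H (W_n - W), so it suffices to show that
   multiplying a cut-null sequence V_n with |V_n| <= 1 by a fixed measurable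
   H : Omega^2 -> [0,1] keeps it cut-null.  The multipliers G with this property
   contain the indicators of rectangles, because the cut norm is a supremum over
   rectangles; they are closed under linear combinations, under countable
   disjoint unions of indicators (the cut norm of 1_D V_n is at most the measure
   of D) and under uniform limits.  By Dynkin's pi-lambda theorem they contain
   every measurable indicator, and the dyadic expansion of H then gives H itself. *)
From HB Require Import structures.
From mathcomp Require Import all_boot all_order all_algebra.
From mathcomp Require Import all_classical all_reals all_analysis.
From mathcomp Require Import measurable_realfun lra.
Import Order.TTheory GRing.Theory Num.Theory.
Local Open Scope classical_set_scope.
Local Open Scope ring_scope.
Set Implicit Arguments. Unset Strict Implicit. Unset Printing Implicit Defensive.

Lemma measurable_inv (R : realType) : measurable_fun [set: R] (@GRing.inv R).
Proof.
have -> : [set: R] = ~` [set 0] `|` [set 0] by rewrite setvU.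
have mC : measurable (~` [set (0:R)]) by apply: measurableC; exact: measurable_set1.
apply/(measurable_funU _ mC (measurable_set1 0)); split.
  apply: open_continuous_measurable_fun; first by rewrite openC; exact: closed_eq.
  by move=> x /set_mem /eqP x0; exact: inv_continuous.
move=> _ B mB; rewrite (_ : _ `&` _ = if (0 : R)^-1 \in B then [set 0] else set0).
  by case: ifP => _ //; exact: measurable_set1.
apply/seteqP; split => [x /= [-> B0]|x]; first by rewrite mem_set.
by case: ifPn => // /set_mem B0 /= ->.
Qed.

Lemma indic_setD (T : Type) (R : pzRingType) (E S : set T) (z : T) :
  S `<=` E -> (\1_(E `\` S) z : R) = \1_E z - \1_S z.
Proof.
move=> SE; rewrite !indicE in_setD.
case: (boolP (z \in S)) => [zS|_]; last by rewrite andbT subr0.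
by rewrite (mem_set (SE _ (set_mem zS))) subrr.
Qed.

Lemma indic_setU_disjoint (T : Type) (R : pzRingType) (A B : set T) (z : T) :
  A `&` B = set0 -> (\1_(A `|` B) z : R) = \1_A z + \1_B z.
Proof.
move=> AB0; rewrite !indicE in_setU.
case: (boolP (z \in A)) => [zA|_]; last by rewrite add0r.
case: (boolP (z \in B)) => [zB|_]; last by rewrite addr0.
have : (A `&` B) z by split; exact: set_mem.
by rewrite AB0.
Qed.

Section measurable_functions.
Context dX (X : measurableType dX) (R : realType).
Implicit Types F G : X -> R.

Definition bounded_measurable F :=
  measurable_fun setT F /\ exists c : R, forall x, `|F x| <= c.

Lemma bounded_measurable_cst (k : R) : bounded_measurable (fun=> k).
Proof. by split; [exact: measurable_cst | exists `|k|]. Qed.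

Lemma bounded_measurable_indic (D : set X) :
  measurable D -> bounded_measurable \1_D.
Proof.
move=> mD; split; first exact: measurable_indic.
by exists 1 => x; rewrite indicE; case: (x \in D); rewrite ?normr1 ?normr0.
Qed.

Lemma bounded_measurableD F G : bounded_measurable F -> bounded_measurable G ->
  bounded_measurable (fun x => F x + G x).
Proof.
move=> [mF [c Fc]] [mG [c' Gc]]; split; first exact: measurable_funD.
by exists (c + c') => x; rewrite (le_trans (ler_normD _ _)) ?lerD.
Qed.

Lemma bounded_measurableB F G : bounded_measurable F -> bounded_measurable G ->
  bounded_measurable (fun x => F x - G x).
Proof.
move=> [mF [c Fc]] [mG [c' Gc]]; split; first exact: measurable_funB.
by exists (c + c') => x; rewrite (le_trans (ler_normB _ _)) ?lerD.
Qed.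

Lemma bounded_measurableM F G : bounded_measurable F -> bounded_measurable G ->
  bounded_measurable (fun x => F x * G x).
Proof.
move=> [mF [c Fc]] [mG [c' Gc]]; split; first exact: measurable_funM.
by exists (c * c') => x; rewrite normrM ler_pM.
Qed.

Lemma bounded_measurable_integrable (P : probability X R) (A : set X) F :
  measurable A -> bounded_measurable F -> P.-integrable A (EFin \o F).
Proof.
move=> mA [mF [c Fc]]; apply: measurable_bounded_integrable => //.
- by rewrite (le_lt_trans (probability_le1 _ mA)) // ltry.
- exact: measurable_funS mF.
- exists c; split; first exact: num_real.
  by move=> r cr x _; apply: le_trans (Fc x) (ltW cr).
Qed.

Lemma abse_integral_le_bound (mu : {measure set X -> \bar R}) (A : set X) F
    (e : R) : measurable A -> measurable_fun setT F -> 0 <= e ->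
  (forall x, `|F x| <= e) -> (`|\int[mu]_(x in A) (F x)%:E| <= e%:E * mu A)%E.
Proof.
move=> mA mF e0 Fe.
have mFA : measurable_fun A (fun x => (F x)%:E).
  by apply/measurable_EFinP; exact: measurable_funS mF.
apply: le_trans (le_abse_integral _ mA mFA) _.
by apply: integral_le_bound => //; apply: aeW => x _; rewrite /= lee_fin.
Qed.

Lemma measurable_superlevel F (c : R) :
  measurable_fun setT F -> measurable [set x | c <= F x].
Proof.
move=> mF; rewrite (_ : [set x | c <= F x] = F @^-1` `[c, +oo[).
  by rewrite -[_ @^-1` _]setTI; apply: mF => //; exact: measurable_itv.
by apply/seteqP; split => x /=; rewrite in_itv /= andbT.
Qed.

Lemma probability_bigcup_tail_cvg0 (P : probability X R) (F : nat -> set X) :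
  (forall n, measurable (F n)) ->
  P (\bigcup_n F n `\` \bigcup_(i < k) F i) @[k --> \oo] --> 0%E.
Proof.
move=> mF; pose D k := \bigcup_n F n `\` \bigcup_(i < k) F i.
have mD k : measurable (D k).
  by apply: measurableD; apply: bigcup_measurable => i _.
have D0 : \bigcap_k D k = set0.
  apply/seteqP; split => // z Dz; have [[i _ Fiz] _] := Dz 0%N I.
  by have [_] := Dz i.+1 I; apply; exists i => /=.
rewrite -(measure0 P) -D0.
apply: nonincreasing_cvg_mu => //.
- by rewrite (le_lt_trans (probability_le1 _ (mD 0%N))) // ltry.
- by apply: bigcap_measurable => [|k _]; [apply/set0P; exact: setT0|exact: mD].
- move=> n m nm; apply/subsetPset => z [Ez nSm]; split => // -[i /= ilt Fiz].
  by apply: nSm; exists i => //=; exact: leq_trans ilt nm.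
Qed.

End measurable_functions.

Definition vanishing (R : realType) (f : nat -> \bar R) :=
  forall e : R, 0 < e -> \forall n \near \oo, (f n <= e%:E)%E.

Lemma cvg0_vanishing (R : realType) (f : nat -> \bar R) :
  f n @[n --> \oo] --> 0%E -> vanishing f.
Proof.
move=> /fine_cvgP [ffin /cvgrPdist_le fc] e e0.
have := fc e e0; apply: filterS2 ffin => n fn.
rewrite sub0r normrN => fne; rewrite -(fineK fn) lee_fin.
exact: le_trans (ler_norm _) fne.
Qed.

Lemma vanishing_cvg0 (R : realType) (f : nat -> \bar R) :
  (forall n, 0 <= f n)%E -> vanishing f -> f n @[n --> \oo] --> 0%E.
Proof.
move=> f0 fv.
have fin n : (f n <= 1%:E)%E -> f n \is a fin_num.
  by move=> fn1; rewrite ge0_fin_numE ?(le_lt_trans fn1) ?ltry.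
apply/fine_cvgP; split; first by have := fv 1 ltr01; apply: filterS.
apply/cvgrPdist_le => e e0; have := fv e e0; apply: filterS => n fne.
have fn : f n \is a fin_num by rewrite ge0_fin_numE ?(le_lt_trans fne) ?ltry.
by rewrite sub0r normrN ger0_norm -lee_fin fineK.
Qed.

Section cutnorm.
Context d (T : measurableType d) (R : realType) (nu : probability T R).
Implicit Types F G V : T * T -> R.

Lemma cutnorm_ub V A B : measurable A -> measurable B ->
  (`| \int[(nu \x nu)%E]_(z in A `*` B) (V z)%:E | <= cutnorm nu V)%E.
Proof. by move=> mA mB; apply: ereal_sup_ubound; exists A, B. Qed.

Lemma cutnorm_ge0 V : (0 <= cutnorm nu V)%E.
Proof. exact: le_trans (abse_ge0 _) (cutnorm_ub V measurable0 measurable0). Qed.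

Lemma cutnorm_le_bound V (e : R) : measurable_fun setT V -> 0 <= e ->
  (forall z, `|V z| <= e) -> (cutnorm nu V <= e%:E)%E.
Proof.
move=> mV e0 Ve; apply: ge_ereal_sup => _ [A [B [mA mB ->]]].
have mAB : measurable (A `*` B) by exact: measurableX.
apply: le_trans (abse_integral_le_bound _ mAB mV e0 Ve) _.
by rewrite -[leRHS]mule1 lee_wpmul2l ?lee_fin ?probability_le1.
Qed.

Lemma cutnormD_le F G : bounded_measurable F -> bounded_measurable G ->
  (cutnorm nu (fun z => (F z + G z)%R) <= cutnorm nu F + cutnorm nu G)%E.
Proof.
move=> bF bG; apply: ge_ereal_sup => _ [A [B [mA mB ->]]].
have mAB : measurable (A `*` B) by exact: measurableX.
under eq_integral do rewrite EFinD.
rewrite integralD //; try exact: bounded_measurable_integrable.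
by apply: le_trans (lee_abs_add _ _) _; apply: leeD; exact: cutnorm_ub.
Qed.

Lemma cutnormZ_le F (k : R) : bounded_measurable F ->
  (cutnorm nu (fun z => (k * F z)%R) <= `|k|%:E * cutnorm nu F)%E.
Proof.
move=> bF; apply: ge_ereal_sup => _ [A [B [mA mB ->]]].
have mAB : measurable (A `*` B) by exact: measurableX.
under eq_integral do rewrite EFinM.
rewrite integralZl //; last exact: bounded_measurable_integrable.
by rewrite abseM lee_wpmul2l //; exact: cutnorm_ub.
Qed.

Lemma integral_indicM (mu : {measure set (T * T) -> \bar R}) (S D : set (T * T))
    V : (\int[mu]_(z in S) (\1_D z * V z)%:E
         = \int[mu]_(z in S `&` D) (V z)%:E)%E.
Proof.
rewrite integral_mkcondr; apply: eq_integral => z _.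
by rewrite /patch indicE; case: ifP => _; rewrite ?mul1r ?mul0r.
Qed.

Lemma cutnorm_indic_le (D : set (T * T)) V : measurable D ->
  measurable_fun setT V -> (forall z, `|V z| <= 1) ->
  (cutnorm nu (fun z => (\1_D z * V z)%R) <= (nu \x nu)%E D)%E.
Proof.
move=> mD mV V1; apply: ge_ereal_sup => _ [A [B [mA mB ->]]].
have mABD : measurable (A `*` B `&` D).
  by apply: measurableI => //; exact: measurableX.
rewrite integral_indicM.
apply: le_trans (abse_integral_le_bound _ mABD mV ler01 V1) _.
by rewrite mul1e le_measure // inE.
Qed.

Lemma cutnorm_rect_le (A0 B0 : set T) V : measurable A0 -> measurable B0 ->
  (cutnorm nu (fun z => (\1_(A0 `*` B0) z * V z)%R) <= cutnorm nu V)%E.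
Proof.
move=> mA0 mB0; apply: ge_ereal_sup => _ [A [B [mA mB ->]]].
by rewrite integral_indicM -setXI; apply: cutnorm_ub; exact: measurableI.
Qed.

End cutnorm.

(* [H - dyadic_rem H k] keeps the first [k] binary digits of [H]. *)
Fixpoint dyadic_rem (aT : Type) (R : realFieldType) (H : aT -> R) (k : nat) : aT -> R :=
  if k is k'.+1 then fun z => dyadic_rem H k' z -
    (2 ^+ k)^-1 * \1_[set w | (2 ^+ k)^-1 <= dyadic_rem H k' w] z
  else H.

Lemma dyadic_rem_measurable dX (X : measurableType dX) (R : realType)
    (H : X -> R) k :
  measurable_fun setT H -> measurable_fun setT (dyadic_rem H k).
Proof.
move=> mH; elim: k => [//|k IH] /=.
apply: measurable_funB => //; apply: measurable_funM => //.
exact/measurable_indic/measurable_superlevel.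
Qed.

Lemma dyadic_rem_bound (aT : Type) (R : realFieldType) (H : aT -> R) k z :
  0 <= H z <= 1 -> 0 <= dyadic_rem H k z <= (2 ^+ k)^-1.
Proof.
move=> H01; elim: k => [|k /andP[r0 r1]] /=; first by rewrite expr0 invr1.
set c := (2 ^+ k.+1)^-1.
have c2 : (2 ^+ k)^-1 = c + c by rewrite /c exprS invfM mulrC -splitr.
rewrite indicE; case: (boolP (z \in _)).
  by rewrite inE /= => cr; rewrite mulr1 subr_ge0 cr lerBlDr -c2.
by rewrite notin_setE /= => /negP; rewrite -ltNge => rc; rewrite mulr0 subr0 r0 ltW.
Qed.

Section cut_multiplier.
Context d (T : measurableType d) (R : realType) (nu : probability T R).
Variable V : nat -> T * T -> R.
Hypothesis mV : forall n, measurable_fun setT (V n).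
Hypothesis V1 : forall n z, `|V n z| <= 1.
Hypothesis V0 : vanishing (fun n => cutnorm nu (V n)).
Implicit Types G : T * T -> R.

Let bounded_measurableV n : bounded_measurable (V n).
Proof. by split => //; exists 1. Qed.

Definition cut_multiplier G :=
  bounded_measurable G /\ vanishing (fun n => cutnorm nu (fun z => G z * V n z)).

Lemma cut_multiplierD G G' : cut_multiplier G -> cut_multiplier G' ->
  cut_multiplier (fun z => G z + G' z).
Proof.
move=> [bG vG] [bG' vG']; split; first exact: bounded_measurableD.
move=> e e0; have e2 : 0 < e / 2 by rewrite divr_gt0.
have := vG _ e2; have := vG' _ e2; apply: filterS2 => n cG' cG.
have -> : (fun z => (G z + G' z) * V n z) = (fun z => G z * V n z + G' z * V n z).
  by apply/funext => z; rewrite mulrDl.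
apply: le_trans (cutnormD_le _ _ _) _; try exact: bounded_measurableM.
by rewrite [e]splitr EFinD leeD.
Qed.

Lemma cut_multiplierZ (k : R) G : cut_multiplier G ->
  cut_multiplier (fun z => k * G z).
Proof.
move=> [bG vG]; split; first exact: bounded_measurableM (bounded_measurable_cst _ k) bG.
move=> e e0; have ke0 : 0 < e / (`|k| + 1) by rewrite divr_gt0 // ltr_wpDl.
have := vG _ ke0; apply: filterS => n cG.
have -> : (fun z => k * G z * V n z) = (fun z => k * (G z * V n z)).
  by apply/funext => z; rewrite mulrA.
apply: le_trans (cutnormZ_le _ _ (bounded_measurableM bG (bounded_measurableV n))) _.
apply: le_trans (lee_wpmul2l _ cG) _ => //.
rewrite -EFinM lee_fin mulrC -mulrA ger_pMr //.
by rewrite mulrC ler_pdivrMr ?mul1r ?lerDl // ltr_wpDl.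
Qed.

Lemma cut_multiplier_cst (k : R) : cut_multiplier (fun=> k).
Proof.
have -> : (fun=> k) = (fun=> k * 1) :> (T * T -> R) by apply/funext => z; rewrite mulr1.
apply: cut_multiplierZ; split; first exact: bounded_measurable_cst.
by under eq_fun do under eq_fun do rewrite mul1r.
Qed.

Lemma cut_multiplier_approx G : bounded_measurable G ->
  (forall e, 0 < e -> exists2 G', cut_multiplier G' &
     forall n, (cutnorm nu (fun z => ((G z - G' z) * V n z)%R) <= e%:E)%E) ->
  cut_multiplier G.
Proof.
move=> bG approx; split => // e e0; have e2 : 0 < e / 2 by rewrite divr_gt0.
have [G' [bG' vG'] GG'] := approx _ e2.
have := vG' _ e2; apply: filterS => n cG'.
have -> : (fun z => G z * V n z) =
    (fun z => G' z * V n z + (G z - G' z) * V n z).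
  by apply/funext => z; rewrite -mulrDl addrC subrK.
apply: le_trans (cutnormD_le _ _ _) _; last by rewrite [e]splitr EFinD leeD.
  exact: bounded_measurableM.
by apply: bounded_measurableM => //; exact: bounded_measurableB.
Qed.

Lemma cut_multiplier_uniform G : bounded_measurable G ->
  (forall e, 0 < e -> exists2 G', cut_multiplier G' & forall z, `|G z - G' z| <= e) ->
  cut_multiplier G.
Proof.
move=> bG approx; apply: cut_multiplier_approx => // e e0.
have [G' [bG' vG'] GG'] := approx _ e0; exists G' => // n.
have [mB _] := bounded_measurableM (bounded_measurableB bG bG') (bounded_measurableV n).
apply: cutnorm_le_bound mB (ltW e0) _ => z.
by rewrite normrM -[e]mulr1 ler_pM.
Qed.

Lemma cut_multiplier_inner_approx (E : set (T * T)) : measurable E ->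
  (forall e, 0 < e -> exists S, [/\ measurable S, S `<=` E,
     cut_multiplier \1_S & ((nu \x nu)%E (E `\` S) <= e%:E)%E]) ->
  cut_multiplier \1_E.
Proof.
move=> mE approx; apply: cut_multiplier_approx; first exact: bounded_measurable_indic.
move=> e e0; have [S [mS SE cS ESe]] := approx _ e0; exists \1_S => // n.
have -> : (fun z => (\1_E z - \1_S z) * V n z) = (fun z => \1_(E `\` S) z * V n z).
  by apply/funext => z; rewrite indic_setD.
exact: le_trans (cutnorm_indic_le _ (measurableD mE mS) (mV n) (V1 n)) ESe.
Qed.

Lemma cut_multiplier_rect (A B : set T) : measurable A -> measurable B ->
  cut_multiplier \1_(A `*` B).
Proof.
move=> mA mB; split; first by apply: bounded_measurable_indic; exact: measurableX.
move=> e e0; have := V0 e0; apply: filterS => n cV.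
exact: le_trans (cutnorm_rect_le _ _ mA mB) cV.
Qed.

Lemma cut_multiplier_setC (S : set (T * T)) :
  cut_multiplier \1_S -> cut_multiplier \1_(~` S).
Proof.
move=> cS; have := cut_multiplierD (cut_multiplier_cst 1) (cut_multiplierZ (-1) cS).
congr cut_multiplier; apply/funext => z; rewrite !indicE in_setC.
by case: (z \in S); rewrite /= ?mulr0 ?mulr1 ?subrr ?addr0.
Qed.

Lemma cut_multiplier_setU (A B : set (T * T)) : A `&` B = set0 ->
  cut_multiplier \1_A -> cut_multiplier \1_B -> cut_multiplier \1_(A `|` B).
Proof.
move=> AB0 cA cB; have := cut_multiplierD cA cB.
by congr cut_multiplier; apply/funext => z; rewrite indic_setU_disjoint.
Qed.

Lemma cut_multiplier_bigcup (F : nat -> set (T * T)) :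
  (forall n, measurable (F n)) -> trivIset setT F ->
  (forall n, cut_multiplier \1_(F n)) -> cut_multiplier \1_(\bigcup_n F n).
Proof.
move=> mF tF cF; apply: cut_multiplier_inner_approx; first exact: bigcup_measurable.
have cS k : cut_multiplier \1_(\bigcup_(i < k) F i).
  elim: k => [|k IH].
    have := cut_multiplier_cst 0; congr cut_multiplier.
    by rewrite bigcup_mkord big_ord0 indic0.
  rewrite bigcup_mkord big_ord_recr -bigcup_mkord /=.
  apply: cut_multiplier_setU => //.
  rewrite -subset0 => z [[i /= ik Fiz] Fkz].
  have ik' : i = k by apply: tF => //; exists z.
  by rewrite ik' ltnn in ik.
move=> e e0.
have [k _ tail] := cvg0_vanishing (probability_bigcup_tail_cvg0 (nu \x nu)%E mF) e0.
exists (\bigcup_(i < k) F i); split => //; last exact: tail k (leqnn k).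
- by apply: bigcup_measurable => i _.
- by move=> z [i _ Fiz]; exists i.
Qed.

Lemma cut_multiplier_indic (S : set (T * T)) : measurable S -> cut_multiplier \1_S.
Proof.
move=> mS.
apply: (@dynkin_induction _ _ [set A `*` B | A in measurable & B in measurable]
  (fun S => cut_multiplier \1_S)) => //.
- exact: measurable_prod_measurableType.
- move=> _ _ [A1 mA1 [A2 mA2 <-]] [B1 mB1 [B2 mB2 <-]].
  rewrite -setXI; exists (A1 `&` B1); first exact: measurableI.
  by exists (A2 `&` B2) => //; exact: measurableI.
- by rewrite indicT; exact: cut_multiplier_cst.
- by move=> _ [A mA [B mB <-]]; exact: cut_multiplier_rect.
- by move=> S0 _; exact: cut_multiplier_setC.
- by move=> F mF tF cF; exact: cut_multiplier_bigcup.
- by rewrite -measurable_prod_measurableType.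
Qed.

Lemma cut_multiplier_unit_interval (H : T * T -> R) : measurable_fun setT H ->
  (forall z, 0 <= H z <= 1) -> cut_multiplier H.
Proof.
move=> mH H01.
have cH k : cut_multiplier (fun z => H z - dyadic_rem H k z).
  elim: k => [|k IH].
    have := cut_multiplier_cst 0; congr cut_multiplier.
    by apply/funext => z; rewrite subrr.
  have mE := measurable_superlevel (2 ^+ k.+1)^-1 (dyadic_rem_measurable k mH).
  have := cut_multiplierD IH (cut_multiplierZ (2 ^+ k.+1)^-1 (cut_multiplier_indic mE)).
  by congr cut_multiplier; apply/funext => z /=; rewrite opprB addrA addrAC.
apply: cut_multiplier_uniform.
  by split => //; exists 1 => z; have /andP[h0 h1] := H01 z; rewrite ger0_norm.
move=> e e0; have [k ke] : exists k, (2 ^+ k)^-1 <= e.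
  exists (Num.Def.archi_bound e^-1).
  have := @upper_nthrootP R e^-1 _ (leqnn _).
  by rewrite invf_plt ?posrE ?exprn_gt0 ?invr_gt0 // => /ltW.
exists (fun z => H z - dyadic_rem H k z) => // z.
rewrite opprB addrC subrK; have /andP[r0 r1] := dyadic_rem_bound k (H01 z).
by rewrite ger0_norm // (le_trans r1 ke).
Qed.

End cut_multiplier.

Lemma cutnorm_mul_cvg0 d (T : measurableType d) (R : realType)
    (nu : probability T R) (V : nat -> T * T -> R) (H : T * T -> R) :
  (forall n, measurable_fun setT (V n)) -> (forall n z, `|V n z| <= 1) ->
  cutnorm nu (V n) @[n --> \oo] --> 0%E ->
  measurable_fun setT H -> (forall z, 0 <= H z <= 1) ->
  cutnorm nu (fun z => H z * V n z) @[n --> \oo] --> 0%E.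
Proof.
move=> mV V1 /cvg0_vanishing V0 mH H01.
apply: vanishing_cvg0 => [n|]; first exact: cutnorm_ge0.
by have [] := cut_multiplier_unit_interval mV V1 V0 mH H01.
Qed.

Lemma divr_ge0_le1 (R : realFieldType) (u w : R) :
  0 <= u -> u <= w -> 0 <= u / w <= 1.
Proof.
have [->|w0] := eqVneq w 0; first by rewrite invr0 mulr0 lexx ler01.
move=> u0 uw; have wp : 0 < w by rewrite lt_def w0 (le_trans u0 uw).
by rewrite divr_ge0 ?(ltW wp) //= (ler_pdivrMr _ _ wp) mul1r.
Qed.

Lemma divrK_le (R : realFieldType) (u w : R) : 0 <= u -> u <= w -> u / w * w = u.
Proof.
have [->|w0] := eqVneq w 0; last by rewrite divfK.
by move=> u0 u0'; apply/eqP; rewrite mulr0 eq_le u0 u0'.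
Qed.

Section graphon.
Context d (T : measurableType d) (R : realType).
Implicit Types F G U W : T * T -> R.

Lemma graphonM F G : graphon F -> graphon G -> graphon (fun z => F z * G z).
Proof.
move=> [mF sF F01] [mG sG G01]; split => [|x y|z].
- exact: measurable_funM.
- by rewrite sF sG.
- have /andP[f0 f1] := F01 z; have /andP[g0 g1] := G01 z.
  by rewrite mulr_ge0 //= mulr_ile1.
Qed.

Lemma graphon_div U W : graphon U -> graphon W -> (forall z, U z <= W z) ->
  graphon (fun z => U z / W z).
Proof.
move=> [mU sU U01] [mW sW _] UW; split => [|x y|z].
- by apply: measurable_funM => //; exact: measurableT_comp (@measurable_inv R) mW.
- by rewrite sU sW.
- by have /andP[u0 _] := U01 z; exact: divr_ge0_le1.
Qed.

Lemma normr_graphonB_le1 F G z : graphon F -> graphon G -> `|F z - G z| <= 1.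
Proof.
move=> [_ _ /(_ z) /andP[f0 f1]] [_ _ /(_ z) /andP[g0 g1]].
by rewrite ler_norml; apply/andP; split; lra.
Qed.

End graphon.

Theorem lemma2p9 (R : realType) (d : measure_display) (T : measurableType d)
  (nu : probability T R)
  (Hborel : borel_space T R) (Hatomless : atomless nu)
  (Wn : nat -> T * T -> R) (W U : T * T -> R)
  (HWn : forall n, graphon (Wn n)) (HW : graphon W)
  (Hcvg : cutnorm nu (fun z => Wn n z - W z) @[n --> \oo] --> 0%E)
  (HU : graphon U) (HUW : forall z, U z <= W z) :
  exists Un : nat -> T * T -> R,
    [/\ forall n, graphon (Un n),
        forall n z, Un n z <= Wn n z
      & cutnorm nu (fun z => Un n z - U z) @[n --> \oo] --> 0%E].
Proof.
pose H z := U z / W z.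
have gH : graphon H := graphon_div HU HW HUW.
have UHW z : U z = H z * W z.
  by case: HU => _ _ /(_ z) /andP[u0 _]; rewrite divrK_le.
exists (fun n z => H z * Wn n z); split => [n|n z|].
- exact: graphonM.
- case: gH => _ _ /(_ z) /andP[h0 h1]; case: (HWn n) => _ _ /(_ z) /andP[w0 _].
  exact: ler_piMl.
- have -> : (fun n => cutnorm nu (fun z => H z * Wn n z - U z)) =
            (fun n => cutnorm nu (fun z => H z * (Wn n z - W z))).
    by apply/funext => n; congr cutnorm; apply/funext => z; rewrite UHW mulrBr.
  case: gH => mH _ H01; apply: cutnorm_mul_cvg0 => // [n|n z].
  + by case: (HWn n) HW => mWn _ _ [mW _ _]; exact: measurable_funB.
  + exact: normr_graphonB_le1.
Qed.
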